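(* Let $r<0$ be an integer and let $f(x)=\sum_{i=0}^{-r}\gamma_ix^i\in\mathbb{K}[x]$. Then $$\sum_{i=0}^m\binom{m}{i}\binom{1-r}{m+i}^{-1}\gamma_{m+i-1}=0\quad\text{for all }1\le m\le\lceil -r/2\rceil$$ if and only if there exist $\delta_0,\dots,\delta_{\lfloor -r/2\rfloor}\in\mathbb{K}$ with $$f(x)=(x-2)^{-r}\sum_{i=0}^{\lfloor -r/2\rfloor}\delta_i\left(\frac{x}{x-2}\right)^{2i}=\sum_{i=0}^{\lfloor -r/2\rfloor}\delta_i\,x^{2i}(x-2)^{-r-2i}.$$
   Context: $\mathbb{K}\in\{\mathbb{Q},\mathbb{R},\mathbb{C}\}$. *)

From HB Require Import structures.
From mathcomp Require Import all_boot all_order all_algebra.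
Set Implicit Arguments.
Unset Strict Implicit.
Unset Printing Implicit Defensive.

From HB Require Import structures.
From mathcomp Require Import all_boot all_order all_algebra.
From mathcomp Require Import ring zify.
Import Order.TTheory GRing.Theory Num.Theory.
Set Implicit Arguments. Unset Strict Implicit. Unset Printing Implicit Defensive.
Local Open Scope ring_scope.

(* Write f in the basis B_k = x^k (x - 2)^(n - k), k <= n, where n = -r.  The
   m-th condition applied to B_k is, up to a nonzero factor, the k-th
   coefficient of R_m = ((x^2 - 1/4)^m)'.  As R_m is an odd polynomial of
   degree 2m - 1, every B_k with k even satisfies all the conditions, while
   the conditions for m = 1, 2, ... successively force the coordinates of f on
   B_1, B_3, ... to vanish. *)

Lemma coef_exp_XsubC (R : comNzRingType) (a : R) N k :
  (('X - a%:P) ^+ N)`_k = 'C(N, k)%:R * (- a) ^+ (N - k).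
Proof.
elim: N k => [|N IH] [|k].
- by rewrite expr0 coef1 mul1r.
- by rewrite expr0 coef1 bin0n mul0r.
- rewrite exprSr mulrBr coefB coefMX coefMC IH !bin0 !subn0 exprS sub0r !mul1r.
  by rewrite -mulrN mulrC.
rewrite exprSr mulrBr coefB coefMX coefMC !IH binS natrD mulrDl /= subSS addrC.
congr (_ + _); rewrite -mulrN -mulrA -exprSr.
case: (leqP k.+1 N) => hk; first by congr (_ * _ ^+ _); lia.
by rewrite bin_small // !mul0r.
Qed.

Lemma bin_trinomial n j k : (k <= j <= n)%N ->
  ('C(n, k) * 'C(n - k, j - k) = 'C(n, j) * 'C(j, k))%N.
Proof.
case/andP=> le_kj le_jn.
have le_jk_nk : (j - k <= n - k)%N by lia.
apply/eqP; rewrite -(@eqn_pmul2r (k`! * (j - k)`! * (n - j)`!)) ?muln_gt0 ?fact_gt0 //.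
apply/eqP.
have nk_jk : (n - k - (j - k) = n - j)%N by lia.
have fact_nk := bin_fact le_jk_nk; rewrite nk_jk in fact_nk.
transitivity n`!.
  by rewrite -(bin_fact (leq_trans le_kj le_jn)) -fact_nk; ring.
by rewrite -(bin_fact le_jn) -(bin_fact le_kj); ring.
Qed.

Lemma sum_ord_even (V : zmodType) (F : nat -> V) n :
  (forall j, (j <= n)%N -> odd j -> F j = 0) ->
  \sum_(j < n.+1) F j = \sum_(i < n./2.+1) F (2 * i)%N.
Proof.
elim: n => [|n IH] F_odd; first by rewrite !big_ord1.
rewrite big_ord_recr /= IH; last by move=> j le_jn; apply: F_odd; lia.
have := odd_double_half n; case: (boolP (odd n)) => [odd_n|even_n] /= n_eq.
  have -> : uphalf n = n./2.+1 by lia.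
  by rewrite [RHS]big_ord_recr /=; congr (_ + F _); lia.
have -> : uphalf n = n./2 by lia.
by rewrite F_odd ?addr0 //= even_n.
Qed.

Section BasisConditions.
Variable K : numFieldType.

Definition bpoly n k : {poly K} := 'X^k * ('X - 2%:P) ^+ (n - k).

Definition cond n m (f : {poly K}) := \sum_(i < m.+1)
  'C(m, i)%:R * ('C(n.+1, m + i)%:R)^-1 * f`_(m + i - 1).

Definition rpoly m : {poly K} := (('X^2 - (4^-1)%:P) ^+ m)^`().

Lemma cond_sum n m N (c : 'I_N -> K) (p : 'I_N -> {poly K}) :
  cond n m (\sum_(j < N) c j *: p j) = \sum_(j < N) c j * cond n m (p j).
Proof.
rewrite /cond; under eq_bigr => i _ do rewrite coef_sum mulr_sumr.
rewrite exchange_big; apply: eq_bigr => j _ /=; rewrite mulr_sumr.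
by apply: eq_bigr => i _; rewrite coefZ mulrCA.
Qed.

Lemma bpoly_span n (f : {poly K}) : (size f <= n.+1)%N ->
  exists a : nat -> K, f = \sum_(j < n.+1) a j *: bpoly n j.
Proof.
elim: n f => [|n IH] f size_f.
  exists (fun _ => f`_0); rewrite big_ord1 /bpoly subnn !expr0 mulr1 alg_polyC.
  exact: size1_polyC.
have nz2 : (-2 : K) ^+ n.+1 != 0 by rewrite expf_neq0 // oppr_eq0 pnatr_eq0.
set c := f.[0] / (-2) ^+ n.+1.
have : root (f - c *: ('X - 2%:P) ^+ n.+1) 0.
  by rewrite /root !hornerE /c mulfVK // subrr.
case/factor_theorem => q f_eq; rewrite polyC0 subr0 in f_eq.
have size_q : (size q <= n.+1)%N.
  have [->|q_neq0] := eqVneq q 0; first by rewrite size_poly0.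
  rewrite -ltnS -(size_mulX q_neq0) -f_eq.
  apply: leq_trans (size_add _ _) _; rewrite size_opp geq_max size_f /=.
  by apply: leq_trans (size_scale_leq _ _) _; rewrite size_exp_XsubC.
have [a q_eq] := IH q size_q.
exists (fun j => if j is j'.+1 then a j' else c).
rewrite -[f](subrK (c *: ('X - 2%:P) ^+ n.+1)) f_eq q_eq addrC mulr_suml.
rewrite [RHS]big_ord_recl /= /bpoly expr0 mul1r subn0; congr (_ + _).
apply: eq_bigr => j _ /=.
by rewrite /bump /= add1n add0n subSS -scalerAl exprSr mulrAC.
Qed.

Lemma rpoly_expand m : rpoly m =
  \sum_(i < m.+1) ('C(m, i) * (m + i))%:R *: ('X - (2^-1)%:P) ^+ (m + i - 1).
Proof.
have shift : 'X - (2^-1)%:P + 1 = 'X + (2^-1)%:P :> {poly K}.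
  by rewrite -addrA -polyC1 -polyCN -polyCD; congr (_ + _%:P); field.
have X2_factor : 'X^2 - (4^-1)%:P = ('X - (2^-1)%:P) * ('X - (2^-1)%:P + 1 :> {poly K}).
  have quarter : (4^-1 : K) = 2^-1 * 2^-1 by field.
  by rewrite shift quarter polyCM; ring.
rewrite /rpoly X2_factor exprMn exprD1n mulr_sumr raddf_sum; apply: eq_bigr => i _.
rewrite -[LHS]/(deriv _) mulrnAr -exprD.
rewrite derivMn deriv_exp derivB derivX derivC subr0 mul1r.
by rewrite natrM -scalerA !scaler_nat subn1.
Qed.

Lemma coef_rpoly m k : (rpoly m)`_k =
  (if odd k then 'C(m, uphalf k)%:R * (- 4^-1) ^+ (m - uphalf k) else 0) *+ k.+1.
Proof.
rewrite /rpoly; have -> : ('X^2 - (4^-1)%:P) ^+ m = ('X - (4^-1)%:P) ^+ m \Po 'X^2 :> {poly K}.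
  by rewrite rmorphXn /= comp_polyB comp_polyX comp_polyC.
rewrite coef_deriv coef_comp_poly_Xn // dvdn2 /= negbK.
by case: ifP => // _; rewrite coef_exp_XsubC divn2.
Qed.

Lemma coef_rpoly_eq0 m k : ~~ odd k || (2 * m <= k)%N -> (rpoly m)`_k = 0.
Proof.
rewrite coef_rpoly; case: ifP => [odd_k /= le_2m_k|_ _]; last exact: mul0rn.
have := odd_uphalfK odd_k; rewrite -muln2 => uphalf_k.
by rewrite bin_small ?mul0r ?mul0rn //; move: (uphalf k) uphalf_k => u; lia.
Qed.

Lemma coef_rpoly_top m : (0 < m)%N -> (rpoly m)`_(2 * m).-1 = (2 * m)%:R.
Proof.
move=> m_gt0; have odd_k : odd (2 * m).-1 by rewrite -subn1 oddB ?oddM //; lia.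
have uphalf_k : uphalf (2 * m).-1 = m.
  by have := odd_uphalfK odd_k; rewrite -muln2; move: (uphalf _) => u; lia.
by rewrite coef_rpoly uphalf_k odd_k binn subnn expr0 mulr1 prednK ?muln_gt0.
Qed.

Lemma cond_bpoly n m k : (0 < m)%N -> (2 * m <= n.+1)%N -> (k <= n)%N ->
  cond n m (bpoly n k) = (-2) ^+ (n - k) / (n.+1 * 'C(n, k))%:R * (rpoly m)`_k.
Proof.
move=> m_gt0 le_2m_n le_kn.
rewrite /cond rpoly_expand coef_sum mulr_sumr; apply: eq_bigr => -[i le_im] _ /=.
rewrite coefZ coef_exp_XsubC /bpoly coefXnM coef_exp_XsubC.
have [j j_eq] : exists j, (m + i = j.+1)%N by exists (m + i).-1; lia.
have le_jn : (j <= n)%N by lia.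
rewrite j_eq subSS subn0; case: ltnP => [lt_jk|le_kj].
  by rewrite (bin_small lt_jk) !(mul0r, mulr0).
have nat_id : (n.+1 * 'C(n, k) * 'C(n - k, j - k) = j.+1 * 'C(j, k) * 'C(n.+1, j.+1))%N.
  by rewrite -mulnA bin_trinomial ?le_kj // mulnA (mul_bin_diag n.+1) mulnAC.
have pow_split : (-2 : K) ^+ (n - k - (j - k)) = (-2) ^+ (n - k) * (- 2^-1) ^+ (j - k).
  have nz2 : (-2 : K) ^+ (j - k) != 0 by rewrite expf_neq0 // oppr_eq0 pnatr_eq0.
  rewrite -invrN exprVn; apply: (canRL (mulfK nz2)).
  by rewrite -exprD; congr (_ ^+ _); lia.
have nz_n : (n.+1 * 'C(n, k))%:R != 0 :> K.
  by rewrite pnatr_eq0 muln_eq0 -lt0n bin_gt0 le_kn.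
have bin_shift : ('C(n - k, j - k)%:R : K) =
    (j.+1 * 'C(j, k) * 'C(n.+1, j.+1))%:R / (n.+1 * 'C(n, k))%:R.
  by rewrite -nat_id natrM mulrC mulKf.
rewrite bin_shift pow_split !natrM; field.
by rewrite nat1r !pnatr_eq0 -!lt0n !bin_gt0 le_kn !ltnS le_jn.
Qed.

Lemma cond_bpoly_eq0 n m k : (0 < m)%N -> (2 * m <= n.+1)%N -> (k <= n)%N ->
  ~~ odd k || (2 * m <= k)%N -> cond n m (bpoly n k) = 0.
Proof. by move=> *; rewrite cond_bpoly // coef_rpoly_eq0 ?mulr0. Qed.

Lemma cond_bpoly_top_neq0 n m : (0 < m)%N -> (2 * m <= n.+1)%N ->
  cond n m (bpoly n (2 * m).-1) != 0.
Proof.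
move=> m_gt0 le_2m_n; rewrite cond_bpoly ?coef_rpoly_top //; last by lia.
rewrite !mulf_neq0 ?invr_eq0 ?expf_neq0 ?oppr_eq0 ?pnatr_eq0 //.
- by rewrite muln_eq0 -lt0n bin_gt0; lia.
- by rewrite muln_eq0; lia.
Qed.

Lemma cond_eq0_odd_coord n (a : nat -> K) :
  (forall m, (0 < m)%N -> (2 * m <= n.+1)%N ->
     cond n m (\sum_(j < n.+1) a j *: bpoly n j) = 0) ->
  forall j, (j <= n)%N -> odd j -> a j = 0.
Proof.
move=> cond_eq0; elim/ltn_ind => j IH le_jn odd_j.
have := odd_uphalfK odd_j; rewrite -muln2; set m := uphalf j => m_eq.
have m_gt0 : (0 < m)%N by lia.
have le_2m_n : (2 * m <= n.+1)%N by lia.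
have j_eq : j = (2 * m).-1 by lia.
have lt_jn : (j < n.+1)%N by [].
have := cond_eq0 m m_gt0 le_2m_n.
rewrite cond_sum (bigD1 (Ordinal lt_jn)) //= big1 ?addr0 => [/eqP|].
  rewrite mulf_eq0 {2}j_eq (negPf (cond_bpoly_top_neq0 m_gt0 le_2m_n)) orbF.
  by move/eqP.
move=> [k lt_kn]; rewrite -val_eqE /= => ne_kj.
have [lt_kj|le_jk] := ltnP k j.
  have [odd_k|even_k] := boolP (odd k); first by rewrite IH ?mul0r.
  by rewrite cond_bpoly_eq0 ?even_k ?mulr0.
by rewrite cond_bpoly_eq0 ?mulr0 // (_ : 2 * m <= k)%N ?orbT //; lia.
Qed.

End BasisConditions.

Arguments bpoly {K} n k.

Theorem proposition4p9 (K : numFieldType) (r : int) (hr : r < 0)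
  (f : {poly K}) (hf : (size f <= `|r|.+1)%N) :
  (forall m : nat, (1 <= m)%N -> (m <= uphalf `|r|)%N ->
     \sum_(i < m.+1)
        ('C(m, i)%:R * ('C(`|r|.+1, m + i)%:R)^-1 * f`_(m + i - 1)) = 0)
  <->
  (exists delta : 'I_(`|r|./2).+1 -> K,
     f = \sum_(i < (`|r|./2).+1)
           delta i *: ('X ^+ (2 * i) * ('X - 2%:P) ^+ (`|r| - 2 * i))).
Proof.
set n := `|r|%N; split => [cond_f | [delta ->] m m_gt0].
  have [a f_eq] := bpoly_span hf.
  have odd_a : forall j, (j <= n)%N -> odd j -> a j = 0.
    apply: cond_eq0_odd_coord => m m_gt0 le_2m_n; rewrite -f_eq.
    by apply: cond_f; rewrite // geq_uphalf_double -mul2n.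
  exists (fun i => a (2 * i)%N).
  rewrite f_eq (sum_ord_even (F := fun j => a j *: bpoly n j)) // => j le_jn odd_j.
  by rewrite odd_a ?scale0r.
rewrite geq_uphalf_double -mul2n => le_2m_n.
rewrite -/(cond n m _) cond_sum big1 // => -[i lt_i_n] _.
by rewrite cond_bpoly_eq0 ?mulr0 ?oddM //=; move: lt_i_n; rewrite ltnS geq_half_double -mul2n.
Qed.
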